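(* For every corelation $R\in\mathbf{FinCorel}^\circ(m,n)$ there exists a morphism $f\in\mathsf{Syn}(\delta)(m,n)$ with $\Pi(f)=R$.
   Context: Write $\underline{m}=\{1,\dots,m\}$. $\mathsf{Syn}(\delta)$ is the free PROP (strict symmetric monoidal category with objects $\mathbb{N}$) on one generator $\delta:1\to2$, modelled graphically: a morphism $f:m\to n$ is an isomorphism class of finite directed acyclic graphs $G(f)$ with $m$ linearly ordered input half-edges, $n$ linearly ordered output half-edges, and finitely many internal vertices, each with exactly one incoming half-edge and an ordered pair of outgoing half-edges; composition glues outputs to inputs, tensor is disjoint union, symmetries are wire crossings (not vertices). $\Pi(f)$ (the ancestry partition) is the equivalence relation on $\underline{m}\sqcup\underline{n}$ in which $x\sim y$ iff the pendant vertices labelled $x,y$ lie in the same connected component of the underlying undirected graph of $G(f)$, with inputs attached as pendant vertices labelled by $\underline{m}$ and outputs as pendant vertices labelled by $\underline{n}$. $\mathbf{FinCorel}^\circ(m,n)$ is the set of equivalence relations $R$ on $\underline{m}\sqcup\underline{n}$ such that (a) each class contains exactly one element of $\underline{m}$ and (b) each class contains at least one element of $\underline{n}$. *)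

From mathcomp Require Import all_boot.
Set Implicit Arguments. Unset Strict Implicit. Unset Printing Implicit Defensive.

(* A representative of a morphism m -> n of Syn(delta): a finite DAG with
   [nv] internal vertices, each having one incoming half-edge and an ordered
   pair (indexed by bool: false = first, true = second) of outgoing half-edges.
   Wire "sources" are the m input half-edges and the 2*nv vertex outputs;
   wire "targets" are the nv vertex inputs and the n output half-edges.
   [wire] glues every source to exactly one target (a bijection). *)
Definition wsrc (m nv : nat) := ('I_m + ('I_nv * bool))%type.
Definition wtgt (n nv : nat) := ('I_nv + 'I_n)%type.

Definition vedge (m n nv : nat) (w : wsrc m nv -> wtgt n nv) : rel 'I_nv :=
  fun u v => [exists b : bool, w (inr (u, b)) == inl v].

Record syn_graph (m n : nat) := SynGraph {
  nv : nat;
  wire : wsrc m nv -> wtgt n nv;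
  wire_bij : bijective wire;
  wire_acyclic : forall u v : 'I_nv, vedge wire u v -> ~~ connect (vedge wire) v u
}.

(* Nodes of the underlying undirected graph: pendant input vertices,
   pendant output vertices, internal vertices. *)
Definition node (m n nv : nat) := ('I_m + 'I_n + 'I_nv)%type.

Definition src_node (m n nv : nat) (s : wsrc m nv) : node m n nv :=
  match s with inl i => inl (inl i) | inr (u, _) => inr u end.
Definition tgt_node (m n nv : nat) (t : wtgt n nv) : node m n nv :=
  match t with inl v => inr v | inr j => inl (inr j) end.

Definition adj0 (m n : nat) (f : syn_graph m n) : rel (node m n (nv f)) :=
  fun x y => [exists s : wsrc m (nv f),
    (@src_node m n (nv f) s == x) && (@tgt_node m n (nv f) (@wire m n f s) == y)].
Definition adj (m n : nat) (f : syn_graph m n) : rel (node m n (nv f)) :=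
  fun x y => @adj0 m n f x y || @adj0 m n f y x.

Definition pend (m n nv : nat) (x : 'I_m + 'I_n) : node m n nv :=
  match x with inl i => inl (inl i) | inr j => inl (inr j) end.

Definition ancestry (m n : nat) (f : syn_graph m n) : rel ('I_m + 'I_n) :=
  fun x y => connect (@adj m n f) (@pend m n (nv f) x) (@pend m n (nv f) y).

Definition fincorel_circ (m n : nat) (R : rel ('I_m + 'I_n)) : Prop :=
  [/\ reflexive R, symmetric R, transitive R,
      (forall x, exists i : 'I_m, R x (inl i) /\ forall i', R x (inl i') -> i' = i)
    & (forall x, exists j : 'I_n, R x (inr j))].

From mathcomp Require Import all_boot zify.
Set Implicit Arguments. Unset Strict Implicit. Unset Printing Implicit Defensive.

(* A corelation in FinCorel° is determined by the map [cls] sending each output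
   to the unique input of its class.  For a class with outputs j1 < ... < jk we
   wire a comb of k - 1 copies of δ: the input feeds the δ of j2, the second leg
   of the δ of jt feeds the δ of j(t+1), the second leg of the last δ (the input
   itself if k = 1) is output j1, and the first leg of the δ of jt is output jt.  Wires go
   up along the outputs, so the graph is acyclic.  In any graph of Syn(δ) every
   node is connected to an input (follow incoming wires back; acyclicity makes
   this terminate), and the comb's wires preserve the class of a node, so its
   components are exactly the classes of the corelation. *)

Lemma connect_rank_le (T : finType) (e : rel T) (r : T -> nat) :
  (forall x y, e x y -> r x < r y) -> forall x y, connect e x y -> r x <= r y.
Proof.
move=> r_lt x y /connectP [p + ->]; elim: p x => //= z p IHp x /andP [exz pz].
exact: leq_trans (ltnW (r_lt _ _ exz)) (IHp _ pz).
Qed.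

Section SynGraphConnectivity.
Variables (m n : nat) (f : syn_graph m n).
Local Notation N := (nv f).
Local Notation wiref := (@wire m n f).
Local Notation vedgef := (vedge wiref).
Local Notation input i := (inl (inl i) : node m n N).
Local Notation adjf := (@adj m n f).
Local Notation src := (@src_node m n N).
Local Notation tgt := (@tgt_node m n N).

Lemma adj_sym : symmetric adjf.
Proof. by move=> x y; rewrite /adj orbC. Qed.

Lemma adj_wire (s : wsrc m N) : adjf (tgt (wiref s)) (src s).
Proof. by apply/orP; right; apply/existsP; exists s; rewrite !eqxx. Qed.

Definition ancestors (v : 'I_N) := [pred u | connect vedgef u v].

Lemma card_ancestors_lt u v : vedgef u v -> #|ancestors u| < #|ancestors v|.
Proof.
move=> uv; apply: proper_card; apply/properP; split.
  by apply/subsetP => w; rewrite !inE => wu; apply: connect_trans wu (connect1 uv).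
by exists v; rewrite !inE ?connect0 // (negbTE (wire_acyclic uv)).
Qed.

Lemma connect_vertex_input (v : 'I_N) : exists i, connect adjf (inr v) (input i).
Proof.
have [k lt_v_k] := ubnP #|ancestors v|; elim: k v lt_v_k => // k IHk v lt_v_k.
have [g _ gK] := @wire_bij m n f.
have := adj_wire (g (inl v)); rewrite gK /=.
case: (g (inl v)) (gK (inl v)) => [i _ | [u b] uv] /= vs; first by exists i; apply: connect1.
have [|i ui] := IHk u.
  by apply: leq_trans (card_ancestors_lt _) lt_v_k; apply/existsP; exists b; rewrite uv.
by exists i; apply: connect_trans (connect1 vs) ui.
Qed.

Lemma connect_node_input (x : node m n N) : exists i, connect adjf x (input i).
Proof.
case: x => [[i|j]|v]; last exact: connect_vertex_input.
  by exists i; apply: connect0.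
have [g _ gK] := @wire_bij m n f.
have := adj_wire (g (inr j)); rewrite gK /=.
case: (g (inr j)) => [i | [u b]] /= js; first by exists i; apply: connect1.
have [i ui] := connect_vertex_input u.
by exists i; apply: connect_trans (connect1 js) ui.
Qed.

End SynGraphConnectivity.

Definition input_of (m n : nat) (cls : 'I_n -> 'I_m) (x : 'I_m + 'I_n) : 'I_m :=
  match x with inl i => i | inr j => cls j end.

Lemma fincorel_circ_input_of (m n : nat) (R : rel ('I_m + 'I_n)) : fincorel_circ R ->
  exists2 cls : 'I_n -> 'I_m, (forall i, exists j, cls j == i) &
    R =2 (fun x y => input_of cls x == input_of cls y).
Proof.
case=> Rrefl Rsym Rtrans /fin_all_exists [c cP] Rout.
have Rc x : R x (inl (c x)) := (cP x).1.
have cE x y : R x (inl y) -> c x = y by move=> xy; apply/esym/(cP x).2.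
have c_input_of x : c x = input_of (c \o inr) x by case: x => // i; apply: cE (Rrefl _).
exists (c \o inr) => [i | x y].
  by have [j ij] := Rout (inl i); exists j; apply/eqP/cE; rewrite Rsym.
rewrite -!c_input_of; apply/idP/eqP => [xy | cxy].
  by apply: cE; apply: Rtrans xy (Rc y).
by apply: (Rtrans _ _ _ (Rc x)); rewrite cxy Rsym.
Qed.

Section CombGraph.
Variables (m n : nat) (cls : 'I_n -> 'I_m).
Hypothesis cls_surj : forall i, exists j, cls j == i.

Definition first_out (i : 'I_m) : 'I_n := [arg min_(j < xchoose (cls_surj i) | cls j == i) j].

Lemma first_outK : cancel first_out cls.
Proof. by move=> i; rewrite /first_out; case: (arg_minnP _ (xchooseP (cls_surj i))) => j /eqP. Qed.

Lemma first_out_min j : first_out (cls j) <= j.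
Proof.
by rewrite /first_out; case: (arg_minnP _ (xchooseP (cls_surj (cls j)))) => k _; apply.
Qed.

Definition nonfirst (j : 'I_n) := j != first_out (cls j).

Lemma first_out_first i : ~~ nonfirst (first_out i).
Proof. by rewrite /nonfirst first_outK eqxx. Qed.

Definition later (j k : 'I_n) := (cls k == cls j) && (j < k).

Definition next_out (j : 'I_n) : option 'I_n :=
  if [pick k | later j k] is Some k0 then Some [arg min_(k < k0 | later j k) k] else None.

Variant next_out_spec (j : 'I_n) : option 'I_n -> Type :=
  | NextOutSome k of later j k & (forall l, later j l -> k <= l) : next_out_spec j (Some k)
  | NextOutNone of (forall l, ~~ later j l) : next_out_spec j None.

Lemma next_outP j : next_out_spec j (next_out j).
Proof.
rewrite /next_out; case: pickP => [k0 jk0 | nolater]; last first.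
  by constructor => l; rewrite nolater.
by case: arg_minnP => // k jk kmin; constructor.
Qed.

Definition class_succ (j : 'I_n) : 'I_n := odflt (first_out (cls j)) (next_out j).

Lemma cls_class_succ j : cls (class_succ j) = cls j.
Proof. by rewrite /class_succ; case: next_outP => [k /andP [/eqP] | _] //=; rewrite first_outK. Qed.

Lemma later_nonfirst j k : later j k -> nonfirst k.
Proof.
case/andP=> /eqP cls_kj jk; apply: contraTneq jk => ->.
by rewrite cls_kj -leqNgt first_out_min.
Qed.

Lemma class_succ_inj : injective class_succ.
Proof.
have later_max j j' : (forall l, ~~ later j l) -> cls j' = cls j -> j' <= j.
  by move=> jmax cls_j'; have := jmax j'; rewrite /later cls_j' eqxx /= -leqNgt.
have next_le j1 j2 k : later j1 k -> later j2 k -> (forall l, later j1 l -> k <= l) -> j2 <= j1.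
  move=> /andP [/eqP c1 _] /andP [/eqP c2 lt2] kmin; rewrite leqNgt; apply/negP => lt12.
  by have := kmin j2; rewrite /later -c2 c1 eqxx lt12 leqNgt lt2 => /(_ isT).
have first_not_later j k i : later j k -> k <> first_out i.
  move=> jk k_first; have := later_nonfirst jk.
  by rewrite /nonfirst k_first first_outK eqxx.
move=> j1 j2; rewrite /class_succ.
case: (next_outP j1) => [k1 jk1 k1min | j1max]; case: (next_outP j2) => [k2 jk2 k2min | j2max] /=.
- move=> ek; subst k2; apply/ord_inj/anti_leq.
  by rewrite (next_le _ _ _ jk1 jk2 k1min) (next_le _ _ _ jk2 jk1 k2min).
- by move=> /(first_not_later _ _ _ jk1).
- by move=> /esym /(first_not_later _ _ _ jk2).
- move=> /(congr1 cls); rewrite !first_outK => c12.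
  by apply/ord_inj/anti_leq; rewrite !later_max.
Qed.

Lemma class_succ_gt j : nonfirst (class_succ j) -> j < class_succ j.
Proof.
rewrite /class_succ; case: next_outP => [k /andP [_ jk] | _] //=.
by rewrite (negbTE (first_out_first _)).
Qed.

Definition comb_nv := #|{: {j : 'I_n | nonfirst j}}|.

Definition vout (u : 'I_comb_nv) : 'I_n := val (enum_val u).

Definition chain_tgt (k : 'I_n) : wtgt n comb_nv :=
  if insub k is Some x then inl (enum_rank x) else inr k.

Lemma vout_inj : injective vout.
Proof. by move=> u v /val_inj /enum_val_inj. Qed.

Lemma vout_nonfirst u : nonfirst (vout u).
Proof. exact: valP. Qed.

Lemma chain_tgtP k :
  if nonfirst k then exists2 v, chain_tgt k = inl v & vout v = k else chain_tgt k = inr k.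
Proof.
rewrite /chain_tgt; case: insubP => [x -> <- | /negbTE ->] //.
by exists (enum_rank x); rewrite // /vout enum_rankK.
Qed.

Lemma chain_tgt_inl k v : chain_tgt k = inl v -> vout v = k.
Proof. by have := chain_tgtP k; case: ifP => [_ [w -> <-] [->] | _ ->]. Qed.

Lemma chain_tgt_inr k j : chain_tgt k = inr j -> ~~ nonfirst j.
Proof.
have := chain_tgtP k; case: ifP => [_ [w ->] // | nfk -> [<-]].
by rewrite nfk.
Qed.

Lemma chain_tgt_inj : injective chain_tgt.
Proof.
move=> k1 k2; have := chain_tgtP k1; case: ifP => [_ [v1 -> <-] | _ ->].
  by move/esym/chain_tgt_inl.
by have := chain_tgtP k2; case: ifP => [_ [v2 ->] | _ -> []].
Qed.

Definition comb_wire (s : wsrc m comb_nv) : wtgt n comb_nv :=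
  match s with
  | inl i => chain_tgt (class_succ (first_out i))
  | inr (u, false) => inr (vout u)
  | inr (u, true) => chain_tgt (class_succ (vout u))
  end.

Lemma comb_wire_inj : injective comb_wire.
Proof.
have succ_inj := inj_comp chain_tgt_inj class_succ_inj.
have first_out_vout i u : first_out i <> vout u.
  by move=> ev; have := vout_nonfirst u; rewrite -ev (negbTE (first_out_first i)).
have chain_vout k u : chain_tgt k <> inr (vout u).
  by move/chain_tgt_inr; rewrite vout_nonfirst.
move=> [i1|[u1 []]] [i2|[u2 []]] //= e;
  try by [case: (chain_vout _ _ e) | case: (chain_vout _ _ (esym e))
         | case: (first_out_vout _ _ (succ_inj _ _ e))
         | case: (first_out_vout _ _ (esym (succ_inj _ _ e)))].
- by rewrite (can_inj first_outK (succ_inj _ _ e)).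
- by rewrite (vout_inj (succ_inj _ _ e)).
- by case: e => /vout_inj ->.
Qed.

Lemma card_comb_wire : #|{: wtgt n comb_nv}| <= #|{: wsrc m comb_nv}|.
Proof.
rewrite !card_sum card_prod card_bool !card_ord.
suff: n <= m + comb_nv by lia.
rewrite -{1}(card_ord n) -(cardC [pred j | nonfirst j]) /comb_nv card_sig addnC leq_add2r.
apply: leq_trans (_ : #|codom first_out| <= m); last first.
  by apply: leq_trans (leq_image_card _ _) _; rewrite card_ord.
apply: subset_leq_card; apply/subsetP => j; rewrite !inE negbK => /eqP ->.
exact: codom_f.
Qed.

Lemma vedge_comb_wire u v : vedge comb_wire u v -> vout u < vout v.
Proof.
case/existsP=> [[]] //= /eqP /chain_tgt_inl vv.
by rewrite vv class_succ_gt // -vv vout_nonfirst.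
Qed.

Lemma comb_wire_acyclic u v : vedge comb_wire u v -> ~~ connect (vedge comb_wire) v u.
Proof.
move=> uv; apply/negP => /(connect_rank_le vedge_comb_wire).
by rewrite leqNgt vedge_comb_wire.
Qed.

Definition comb_graph : syn_graph m n :=
  SynGraph (inj_card_bij comb_wire_inj card_comb_wire) comb_wire_acyclic.

Local Notation adjc := (@adj m n comb_graph).

Definition node_input (x : node m n comb_nv) : 'I_m :=
  match x with inl (inl i) => i | inl (inr j) => cls j | inr u => cls (vout u) end.

Lemma node_input_wire s :
  node_input (@tgt_node m n comb_nv (comb_wire s)) = node_input (@src_node m n comb_nv s).
Proof.
have chain_input k : node_input (@tgt_node m n comb_nv (chain_tgt k)) = cls k.
  by have := chain_tgtP k; case: ifP => [_ [v -> <-] | _ ->].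
by case: s => [i|[u []]] //=; rewrite chain_input cls_class_succ ?first_outK.
Qed.

Lemma connect_node_input_eq x y : connect adjc x y -> node_input x = node_input y.
Proof.
have adj_eq : closed adjc [pred z | node_input z == node_input x].
  move=> z1 z2 /orP [] /existsP [s /andP [/eqP <- /eqP <-]];
  by rewrite !inE node_input_wire.
by move=> /(closed_connect adj_eq); rewrite !inE eqxx => /esym /eqP.
Qed.

Lemma connect_pend_input x : connect adjc (pend comb_nv x) (inl (inl (input_of cls x))).
Proof.
have [i xi] := @connect_node_input m n comb_graph (pend comb_nv x).
by have := connect_node_input_eq xi; case: x xi => [i'|j] xi /= ->.
Qed.

Lemma ancestry_comb_graph x y : ancestry comb_graph x y = (input_of cls x == input_of cls y).
Proof.
apply/idP/eqP => [xy | exy].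
  have := connect_node_input_eq xy; by case: x {xy}; case: y.
apply: connect_trans (connect_pend_input x) _.
by rewrite exy (sym_connect_sym (@adj_sym _ _ _)) connect_pend_input.
Qed.

End CombGraph.

Theorem proposition2p13 (m n : nat) (R : rel ('I_m + 'I_n)) :
  fincorel_circ R -> exists f : syn_graph m n, ancestry f =2 R.
Proof.
case/fincorel_circ_input_of => cls cls_surj R_input.
by exists (comb_graph cls_surj) => x y; rewrite ancestry_comb_graph R_input.
Qed.
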